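(* For every $n \ge 1$, $$ B^+_n(x) = 2(n-1)x\, B^+_{n-1}(x) + 2x(1-x) \frac{d B^+_{n-1}}{dx}(x) + B_{n-1}(x). $$ Moreover, as formal power series in $t$, $$ \sum_{n \ge 0} B^+_n(x) \frac{t^n}{n!} = \frac{e^t (e^{xt} - x e^t)}{e^{2xt} - x e^{2t}} \quad\text{and}\quad \sum_{n \ge 0} B^-_n(x) \frac{t^n}{n!} = \frac{x e^t (e^t - e^{xt})}{e^{2xt} - x e^{2t}}. $$
   Context: A signed permutation of $[n]$ is a set $S = \{a_1, \dots, a_n\}$ with $a_i \in \{i, -i\}$, together with a bijection $w : S \to S$. $B_n$ is the set of all of them. - An index $i \in \{0, \dots, n-1\}$ is a $B$-descent if $w(a_i) > w(a_{i+1})$, with $w(a_0) = 0$; $\mathrm{des}_B(w)$ is the number of $B$-descents. - $B_n(x) = \sum_{w \in B_n} x^{\mathrm{des}_B(w)}$, with $B_0(x) = 1$. - $B^+_n(x)$ (resp. $B^-_n(x)$) is the same sum restricted to $w$ with $w(a_n) > 0$ (resp. $< 0$), with $B^+_0(x) = 1$ and $B^-_0(x) = 0$. *)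

From HB Require Import structures.
From mathcomp Require Import all_boot all_order all_algebra all_fingroup.
Set Implicit Arguments. Unset Strict Implicit. Unset Printing Implicit Defensive.
Import Order.TTheory GRing.Theory Num.Theory.
Local Open Scope ring_scope.

(* A signed permutation of [n]: the sign pattern s chooses S = {a_1..a_n}
   with a_i = -i if s (i-1) else i, and p : {perm 'I_n} encodes the bijection
   w : S -> S, w(a_i) = a_{p(i)} (0-indexed on 'I_n). *)
Definition signed_perm (n : nat) : finType :=
  ({ffun 'I_n -> bool} * {perm 'I_n})%type.

Definition sp_a n (s : {ffun 'I_n -> bool}) (i : 'I_n) : int :=
  if s i then - (i.+1 : int) else (i.+1 : int).

Definition sp_w n (w : signed_perm n) (i : 'I_n) : int :=
  sp_a w.1 (w.2 i).

(* value w(a_j) for j in 0..n, with w(a_0) = 0 *)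
Definition sp_val n (w : signed_perm n) (j : nat) : int :=
  nth 0 (0 :: [seq sp_w w i | i <- enum 'I_n]) j.

Definition desB n (w : signed_perm n) : nat :=
  #|[set i : 'I_n | sp_val w i.+1 < sp_val w i]|.

Definition Bpoly (n : nat) : {poly rat} :=
  \sum_(w : signed_perm n) 'X^(desB w).

Definition Bplus (n : nat) : {poly rat} :=
  if n is 0 then 1 else \sum_(w : signed_perm n | 0 < sp_val w n) 'X^(desB w).

Definition Bminus (n : nat) : {poly rat} :=
  if n is 0 then 0 else \sum_(w : signed_perm n | sp_val w n < 0) 'X^(desB w).

(* Formal power series in t with coefficients in Q[x]: t^k-coefficient map. *)
Definition series := nat -> {poly rat}.

Definition ser_mul (f g : series) : series :=
  fun N => \sum_(k < N.+1) f k * g (N - k)%N.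

Definition ser_exp (c : {poly rat}) : series :=
  fun k => ((k`!)%:R^-1 : rat) *: c ^+ k.

Definition egf (P : nat -> {poly rat}) : series :=
  fun k => ((k`!)%:R^-1 : rat) *: P k.

From HB Require Import structures.
From mathcomp Require Import all_boot all_order all_algebra all_fingroup.
From mathcomp Require Import zify ring.
From Stdlib Require Import FunctionalExtensionality.
Import Order.TTheory GRing.Theory Num.Theory.
Set Implicit Arguments. Unset Strict Implicit. Unset Printing Implicit Defensive.
Local Open Scope ring_scope.

(* Every signed permutation of [n+1] arises exactly once from
   a signed permutation w of [n] by inserting the letter +-(n+1) into the
   one-line word of w at one of n+1 places (insert_top).  Since this letter
   dominates all others in absolute value, inserting it into the i-th gap
   (i < n) creates a new descent iff that gap was an ascent, and leaves the
   last letter unchanged; appending it creates a descent iff it is negative.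
   Summing over insertions gives, for any condition P on the last letter,
   one recurrence (Bsel_rec) that specialises to those of B_n and of B^+_n.

   On exponential generating functions in t these
   recurrences become equations L F = a t F + b t^2 F + E for the operator
   L = t d/dt - 2xt (t d/dt) - 2x(1-x) t d/dx, which is a derivation and whose
   equations have at most one solution with a given constant term.  With
   D = e^(2xt) - x e^(2t) one checks that D B(t) and D B^+(t) solve the same
   equations as (1-x) e^((1+x)t) and e^((1+x)t) - x e^(2t), hence equal them;
   the identity for B^- follows from B^-_n = B_n - B^+_n. *)

Fixpoint des_word (a : int) (v : seq int) : nat :=
  if v is b :: v' then ((b < a)%R + des_word b v')%N else 0%N.

Definition descent_at (a : int) (v : seq int) (i : nat) : bool :=
  nth 0 (a :: v) i.+1 < nth 0 (a :: v) i.

Lemma des_word_sum a v :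
  des_word a v = (\sum_(i < size v) descent_at a v i)%N.
Proof.
elim: v a => [|b v IH] a /=; first by rewrite big_ord0.
by rewrite big_ord_recl IH.
Qed.

Definition insert_at (i : nat) (y : int) (v : seq int) : seq int :=
  take i v ++ y :: drop i v.

Definition abs_below (N : nat) (z : int) : bool := (- (N%:Z) < z) && (z < N%:Z).

Lemma des_insert_gap N y v a i :
  (i < size v)%N -> all (abs_below N) (a :: v) -> y = N%:Z \/ y = - (N%:Z) ->
  des_word a (insert_at i y v) = (des_word a v + ~~ descent_at a v i)%N.
Proof.
move=> + + y_top.
elim: v a i => [|b v IH] a [|i] //= lt_i /andP[a_below /andP[b_below v_below]].
  move: a_below b_below; rewrite /abs_below /descent_at => /andP[? ?] /andP[? ?].
  by case: y_top => ->; case: (b < a); lia.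
by rewrite IH ?addnA //= b_below.
Qed.

Lemma des_insert_end N y v a :
  all (abs_below N) (a :: v) -> y = N%:Z \/ y = - (N%:Z) ->
  des_word a (insert_at (size v) y v) = (des_word a v + (y < 0)%R)%N.
Proof.
rewrite /insert_at take_size drop_size.
elim: v a => [|b v IH] a /=.
  by rewrite andbT /abs_below => /andP[? ?] [] ->; lia.
by move=> /andP[a_below /andP[b_below v_below]] y_top; rewrite IH ?addnA //= b_below.
Qed.

Definition word n (w : signed_perm n) : seq int := [seq sp_w w i | i <- enum 'I_n].

Lemma size_word n (w : signed_perm n) : size (word w) = n.
Proof. by rewrite size_map size_enum_ord. Qed.

Lemma nth_word n (w : signed_perm n) (k : 'I_n) : nth 0 (word w) k = sp_w w k.
Proof. by rewrite (nth_map k) ?size_enum_ord // nth_ord_enum. Qed.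

Lemma desB_descents n (w : signed_perm n) :
  desB w = (\sum_(i < n) descent_at 0 (word w) i)%N.
Proof.
rewrite /desB -sum1_card big_mkcond /=.
apply: eq_bigr => i _; rewrite inE.
by change (sp_val w i.+1 < sp_val w i) with (descent_at 0 (word w) i); case: ifP.
Qed.

Lemma desB_word n (w : signed_perm n) : desB w = des_word 0 (word w).
Proof.
rewrite desB_descents des_word_sum.
by move: (word w) (size_word w); clear w => v <-.
Qed.

Lemma desB_le n (w : signed_perm n) : (desB w <= n)%N.
Proof. by rewrite /desB; apply: leq_trans (max_card _) _; rewrite card_ord. Qed.

Lemma word_below n (w : signed_perm n) : all (abs_below n.+1) (0 :: word w).
Proof.
apply/allP => z /predU1P [-> //|/mapP [k _ ->]].
rewrite /sp_w /sp_a /abs_below; have := ltn_ord (w.2 k).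
by case: (w.1 (w.2 k)) => ?; apply/andP; split; lia.
Qed.

Definition extend_signs n (s : {ffun 'I_n -> bool}) (b : bool) :
  {ffun 'I_n.+1 -> bool} :=
  [ffun k => if unlift ord_max k is Some k' then s k' else b].

(* The signed permutation of [n+1] obtained from w by inserting the letter
   +-(n+1) (negative iff b) as the (i+1)-th letter of its one-line word. *)
Definition insert_top n (x : signed_perm n * ('I_n.+1 * bool)) : signed_perm n.+1 :=
  (extend_signs x.1.1 x.2.2, lift_perm x.2.1 ord_max x.1.2).

Definition top_letter (n : nat) (b : bool) : int :=
  if b then - (n.+1)%:Z else (n.+1)%:Z.

Lemma top_letter_cases n b :
  top_letter n b = (n.+1)%:Z \/ top_letter n b = - (n.+1)%:Z.
Proof. by case: b; [right|left]. Qed.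

Lemma insert_top_inj n : injective (@insert_top n).
Proof.
move=> [[s q] [i b]] [[s' q'] [i' b']] /= [eq_s eq_p].
have eq_i : i = i'.
  by apply: (@perm_inj _ (lift_perm i ord_max q)); rewrite {2}eq_p !lift_perm_id.
subst i'.
have eq_q : q = q'.
  apply/permP => k; apply: (@lift_inj _ ord_max).
  by rewrite -(lift_perm_lift i) eq_p lift_perm_lift.
have eq_b : b = b'.
  by move/ffunP: eq_s => /(_ ord_max); rewrite !ffunE unlift_none.
suff eq_signs : s = s' by rewrite eq_signs eq_q eq_b.
apply/ffunP => k; move/ffunP: eq_s => /(_ (lift ord_max k)).
by rewrite !ffunE liftK.
Qed.

Lemma insert_top_bij n : bijective (@insert_top n).
Proof.
apply: inj_card_bij; first exact: insert_top_inj.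
rewrite /signed_perm !card_prod !card_ffun !card_Sn !card_ord card_bool.
rewrite expnS factS; lia.
Qed.

Lemma sum_insert_top n (G : signed_perm n.+1 -> {poly rat}) :
  \sum_(w : signed_perm n.+1) G w =
  \sum_(w : signed_perm n) \sum_(i : 'I_n.+1) \sum_(b : bool) G (insert_top (w, (i, b))).
Proof.
rewrite (reindex (@insert_top n) (onW_bij _ (insert_top_bij n))) /=.
under [RHS]eq_bigr => w _ do rewrite pair_big /=.
by rewrite pair_big; apply: eq_bigr => [[w [i b]]] _.
Qed.

Lemma word_insert_top n (w : signed_perm n) (i : 'I_n.+1) b :
  word (insert_top (w, (i, b))) = insert_at i (top_letter n b) (word w).
Proof.
have le_i : (i <= n)%N by rewrite -ltnS.
have value_at_i : sp_w (insert_top (w, (i, b))) i = top_letter n b.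
  by rewrite /sp_w /= lift_perm_id /sp_a ffunE unlift_none.
have value_lift k : sp_w (insert_top (w, (i, b))) (lift i k) = sp_w w k.
  by rewrite /sp_w /= lift_perm_lift /sp_a ffunE liftK lift_max.
apply: (@eq_from_nth _ 0).
  rewrite size_word /insert_at size_cat /= size_takel ?size_word //.
  by rewrite size_drop size_word; lia.
move=> k; rewrite size_word => lt_k.
rewrite (nth_word _ (Ordinal lt_k)) /insert_at nth_cat size_takel ?size_word //.
case: (ltngtP k i) => cmp_ki.
- have lt_kn : (k < n)%N by have := ltn_ord i; lia.
  have -> : Ordinal lt_k = lift i (Ordinal lt_kn).
    by apply: val_inj; rewrite /= /bump leqNgt cmp_ki.
  by rewrite value_lift nth_take // (nth_word _ (Ordinal lt_kn)).
- have lt_kn : (k.-1 < n)%N by lia.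
  have -> : Ordinal lt_k = lift i (Ordinal lt_kn).
    apply: val_inj => /=; case: k lt_k cmp_ki {lt_kn} => //= k _ lt_ik.
    by rewrite /bump -ltnS lt_ik.
  rewrite value_lift; case def_d: (k - i)%N => [|d]; first by move: cmp_ki def_d; lia.
  by rewrite /= nth_drop -(nth_word _ (Ordinal lt_kn)) /=; congr nth; lia.
- have -> : Ordinal lt_k = i by apply: val_inj.
  by rewrite value_at_i cmp_ki subnn.
Qed.

Lemma desB_insert_gap n (w : signed_perm n) (i : 'I_n) b :
  desB (insert_top (w, (widen_ord (leqnSn n) i, b))) =
  (desB w + ~~ descent_at 0 (word w) i)%N.
Proof.
rewrite !desB_word word_insert_top (@des_insert_gap n.+1) ?size_word ?word_below //=.
exact: top_letter_cases.
Qed.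

Lemma desB_insert_end n (w : signed_perm n) b :
  desB (insert_top (w, (ord_max, b))) = (desB w + b)%N.
Proof.
rewrite !desB_word word_insert_top /=.
have := des_insert_end (word_below w) (top_letter_cases n b).
by rewrite size_word => ->; congr addn; case: b => /=; lia.
Qed.

Lemma last_insert_gap n (w : signed_perm n) (i : 'I_n) b :
  sp_val (insert_top (w, (widen_ord (leqnSn n) i, b))) n.+1 = sp_val w n.
Proof.
case: n w i => [|n] w [i lt_i] //.
rewrite /sp_val -!/(word _) word_insert_top /= /insert_at nth_cat.
rewrite size_takel ?size_word ?(ltnW lt_i) // ltnNge (ltnW lt_i) /=.
case def_d: (n.+1 - i)%N => [|d]; first by lia.
by rewrite /= nth_drop; congr nth; lia.
Qed.

Lemma last_insert_end n (w : signed_perm n) b :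
  sp_val (insert_top (w, (ord_max, b))) n.+1 = top_letter n b.
Proof.
rewrite /sp_val -!/(word _) word_insert_top /= /insert_at nth_cat.
by rewrite size_takel ?size_word // ltnn subnn.
Qed.

Lemma sum_gap_monomials n (c : 'I_n -> bool) d :
  \sum_(i < n) ('X^(d + ~~ c i) : {poly rat}) =
  ((\sum_(i < n) c i)%N)%:R * 'X^d + ((n - \sum_(i < n) c i)%N)%:R * 'X^(d.+1).
Proof.
have -> : (n - \sum_(i < n) c i)%N = (\sum_(i < n) ~~ c i)%N.
  suff : (\sum_(i < n) c i + \sum_(i < n) ~~ c i)%N = n by lia.
  rewrite -big_split /= (eq_bigr (fun _ => 1%N)) ?sum1_card ?card_ord //.
  by move=> i _; case: (c i).
rewrite !natr_sum !mulr_suml -big_split /=.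
apply: eq_bigr => i _.
by case: (c i); rewrite /= ?addn0 ?addn1 !(mul1r, mul0r, addr0, add0r).
Qed.

Definition dx_coef : {poly rat} := 'X *+ 2 * (1 - 'X).

(* The 2n gap insertions into a word with d descents, as the recurrence
   operator p |-> 2nx p + 2x(1-x) p' applied to x^d. *)
Lemma gap_weight n d : (d <= n)%N ->
  (d%:R * 'X^d + (n - d)%:R * 'X^(d.+1)) *+ 2 =
  (2 * n%:R) *: ('X * 'X^d) + dx_coef * ('X^d)^`() :> {poly rat}.
Proof.
move=> le_dn; rewrite natrB // derivXn -mul_polyC rmorphM /= !rmorph_nat /dx_coef.
by case: d le_dn => [|d] _ /=; rewrite ?exprS; ring.
Qed.

(* The insertions into w whose result has its last letter in P, counted by
   descents: gaps keep the last letter, the end makes it +-(n+1). *)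
Lemma insertions_weight (P : pred int) n (w : signed_perm n) :
  \sum_(i : 'I_n.+1) \sum_(b : bool)
     (if P (sp_val (insert_top (w, (i, b))) n.+1)
      then 'X^(desB (insert_top (w, (i, b)))) else 0) =
  (if P (sp_val w n)
   then ((desB w)%:R * 'X^(desB w) + (n - desB w)%:R * 'X^((desB w).+1)) *+ 2
   else 0)
  + (if P (top_letter n false) then 'X^(desB w) else 0)
  + (if P (top_letter n true) then 'X * 'X^(desB w) else 0) :> {poly rat}.
Proof.
rewrite big_ord_recr /= big_bool !last_insert_end !desB_insert_end addn0 addn1.
rewrite exprS -addrA [X in _ + X]addrC; congr (_ + _).
under eq_bigr => i _ do rewrite big_bool /= !last_insert_gap !desB_insert_gap -mulr2n.
case: ifP => _; last by rewrite big1 // => i _; rewrite mul0rn.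
by rewrite sumrMnl sum_gap_monomials -desB_descents exprS.
Qed.

Definition Bsel (P : pred int) n : {poly rat} :=
  \sum_(w : signed_perm n | P (sp_val w n)) 'X^(desB w).

Lemma Bsel_rec (P : pred int) n :
  Bsel P n.+1 =
  (2 * n%:R) *: ('X * Bsel P n) + dx_coef * (Bsel P n)^`()
  + (if P (top_letter n false) then Bpoly n else 0)
  + (if P (top_letter n true) then 'X * Bpoly n else 0).
Proof.
have push_if (c : bool) (F : signed_perm n -> {poly rat}) :
    (if c then \sum_w F w else 0) = \sum_w (if c then F w else 0).
  by case: c => //; rewrite big1.
rewrite /Bsel /Bpoly big_mkcond sum_insert_top [in RHS]big_mkcond /=.
rewrite raddf_sum !mulr_sumr scaler_sumr !push_if -!big_split /=.
apply: eq_bigr => w _; rewrite insertions_weight.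
case: ifP => _; first by rewrite gap_weight ?desB_le.
by rewrite mulr0 scaler0 deriv0 mulr0 !add0r.
Qed.

Lemma Bpoly_rec n :
  Bpoly n.+1 = (2 * n%:R) *: ('X * Bpoly n) + dx_coef * (Bpoly n)^`()
               + Bpoly n + 'X * Bpoly n.
Proof. exact: (Bsel_rec xpredT n). Qed.

(* The recurrence for B^+_n (last letter positive); for n = 0 the convention
   B^+_0 = 1 is harmless since B^+_0 is constant. *)
Lemma Bplus_rec n :
  Bplus n.+1 = (2 * n%:R) *: ('X * Bplus n) + dx_coef * (Bplus n)^`() + Bpoly n.
Proof.
have := Bsel_rec (fun z => 0 < z) n; rewrite /= addr0 => rec.
apply: etrans rec _.
case: n => [|n] //; rewrite /Bsel big_pred0 => [|w]; last by rewrite ltxx.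
have -> : Bplus 0 = 1 by [].
by rewrite -polyC1 derivC deriv0 !mulr0 !scale0r.
Qed.

Lemma Bpoly0 : Bpoly 0 = 1.
Proof.
rewrite /Bpoly (eq_bigr (fun _ => 1)); last first.
  by move=> w _; have := desB_le w; rewrite leqn0 => /eqP ->.
by rewrite sumr_const /signed_perm card_prod card_ffun card_Sn !card_ord card_bool.
Qed.

(* B^-_n = B_n - B^+_n, the last letter of a signed permutation of [n] being
   nonzero when n >= 1. *)
Lemma Bminus_eq n : Bminus n = Bpoly n - Bplus n.
Proof.
case: n => [|n]; first by rewrite /Bminus /Bplus Bpoly0 subrr.
rewrite /Bminus /Bplus /Bpoly.
rewrite [in RHS](bigID (fun w : signed_perm n.+1 => 0 < sp_val w n.+1)) /=.
rewrite addrAC subrr add0r; apply: eq_bigl => w.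
rewrite /sp_val -/(word _) /= (nth_word _ ord_max) /sp_w /sp_a.
by case: (w.1 (w.2 ord_max)); lia.
Qed.

Lemma series_ext (f g : series) : (forall n, f n = g n) -> f = g.
Proof. exact: functional_extensionality. Qed.

Definition zero_series : series := fun _ => 0.
Definition sadd (f g : series) : series := fun n => f n + g n.
Definition ssub (f g : series) : series := fun n => f n - g n.
Definition sscale (c : {poly rat}) (f : series) : series := fun n => c * f n.
Definition tshift (f : series) : series := fun n => if n is m.+1 then f m else 0.
Definition tdiff (f : series) : series := fun n => n%:R * f n.
Definition xdiff (f : series) : series := fun n => (f n)^`().

Lemma ser_mulDl f g h : ser_mul (sadd f g) h = sadd (ser_mul f h) (ser_mul g h).
Proof.
by apply: series_ext => n; rewrite /ser_mul /sadd -big_split;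
  apply: eq_bigr => k _; exact: mulrDl.
Qed.

Lemma ser_mulDr f g h : ser_mul f (sadd g h) = sadd (ser_mul f g) (ser_mul f h).
Proof.
by apply: series_ext => n; rewrite /ser_mul /sadd -big_split;
  apply: eq_bigr => k _; exact: mulrDr.
Qed.

Lemma ser_mulBl f g h : ser_mul (ssub f g) h = ssub (ser_mul f h) (ser_mul g h).
Proof.
by apply: series_ext => n; rewrite /ser_mul /ssub -sumrB;
  apply: eq_bigr => k _; exact: mulrBl.
Qed.

Lemma ser_mulBr f g h : ser_mul f (ssub g h) = ssub (ser_mul f g) (ser_mul f h).
Proof.
by apply: series_ext => n; rewrite /ser_mul /ssub -sumrB;
  apply: eq_bigr => k _; exact: mulrBr.
Qed.

Lemma ser_mul0 f : ser_mul f zero_series = zero_series.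
Proof. by apply: series_ext => n; rewrite /ser_mul big1 // => k _; rewrite mulr0. Qed.

Lemma ser_mul0l f : ser_mul zero_series f = zero_series.
Proof. by apply: series_ext => n; rewrite /ser_mul big1 // => k _; rewrite mul0r. Qed.

Lemma ser_mulZl c f g : ser_mul (sscale c f) g = sscale c (ser_mul f g).
Proof.
by apply: series_ext => n; rewrite /ser_mul /sscale mulr_sumr;
  apply: eq_bigr => k _; rewrite mulrA.
Qed.

Lemma ser_mulZr c f g : ser_mul f (sscale c g) = sscale c (ser_mul f g).
Proof.
by apply: series_ext => n; rewrite /ser_mul /sscale mulr_sumr;
  apply: eq_bigr => k _; rewrite mulrCA.
Qed.

Lemma ser_mul_tshiftl f g : ser_mul (tshift f) g = tshift (ser_mul f g).
Proof.
apply: series_ext => -[|n]; rewrite /ser_mul /tshift; first by rewrite big_ord1 mul0r.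
by rewrite big_ord_recl /= mul0r add0r.
Qed.

Lemma ser_mul_tshiftr f g : ser_mul f (tshift g) = tshift (ser_mul f g).
Proof.
apply: series_ext => -[|n]; rewrite /ser_mul /tshift; first by rewrite big_ord1 mulr0.
rewrite big_ord_recr /= subnn mulr0 addr0; apply: eq_bigr => k _ /=.
by rewrite subSn // -ltnS.
Qed.

Definition ser_mulE := (ser_mulDl, ser_mulDr, ser_mulZl, ser_mulZr,
  ser_mul_tshiftl, ser_mul_tshiftr, ser_mul0, ser_mul0l).

Lemma tdiff_mul f g :
  tdiff (ser_mul f g) = sadd (ser_mul (tdiff f) g) (ser_mul f (tdiff g)).
Proof.
apply: series_ext => n; rewrite /ser_mul /tdiff /sadd mulr_sumr -big_split.
apply: eq_bigr => k _ /=; have le_kn : (k <= n)%N by rewrite -ltnS.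
by rewrite -{1}(subnKC le_kn) natrD; ring.
Qed.

Lemma xdiff_mul f g :
  xdiff (ser_mul f g) = sadd (ser_mul (xdiff f) g) (ser_mul f (xdiff g)).
Proof.
apply: series_ext => n; rewrite /ser_mul /xdiff /sadd raddf_sum -big_split.
by apply: eq_bigr => k _; exact: derivM.
Qed.

(* The operator L = t d/dt - 2x t (t d/dt) - 2x(1-x) t d/dx, which turns the
   recurrences for B_n and B^+_n into linear differential equations. *)
Definition Lop (f : series) : series :=
  ssub (ssub (tdiff f) (sscale ('X *+ 2) (tshift (tdiff f))))
       (tshift (sscale dx_coef (xdiff f))).

Lemma Lop_mul f g :
  Lop (ser_mul f g) = sadd (ser_mul (Lop f) g) (ser_mul f (Lop g)).
Proof.
rewrite /Lop tdiff_mul xdiff_mul !ser_mulBl !ser_mulBr !ser_mulZl !ser_mulZr.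
rewrite !ser_mul_tshiftl !ser_mul_tshiftr !ser_mulZl !ser_mulZr.
by apply: series_ext => -[|n]; rewrite /ssub /sadd /sscale /tshift; ring.
Qed.

Definition solves (a b : {poly rat}) (e f : series) : Prop :=
  forall n, Lop f n = tshift (sscale a f) n + sscale b (tshift (tshift f)) n + e n.

Lemma solves_eq a b e f : solves a b e f ->
  Lop f = sadd (sadd (tshift (sscale a f)) (sscale b (tshift (tshift f)))) e.
Proof. by move=> sol; apply: series_ext. Qed.

Lemma Lop_succ f n :
  n.+1%:R * f n.+1 = Lop f n.+1 + 'X *+ 2 * (n%:R * f n) + dx_coef * (f n)^`().
Proof. by rewrite /Lop /ssub /tdiff /tshift /sscale /xdiff /=; ring. Qed.

(* Since (n+1) f_(n+1) is determined by f_n and f_(n-1), a solution is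
   determined by its constant term. *)
Lemma solves_unique a b e f g :
  f 0%N = g 0%N -> solves a b e f -> solves a b e g -> f = g.
Proof.
move=> eq0 sol_f sol_g.
suff eq_upto n : forall k, (k <= n)%N -> f k = g k.
  by apply: series_ext => n; apply: (eq_upto n).
elim: n => [|n IH] k; first by rewrite leqn0 => /eqP ->.
rewrite leq_eqVlt => /predU1P [->|]; last exact: IH.
have n1_neq0 : n.+1%:R != 0 :> {poly rat}.
  by rewrite -(rmorph_nat (@polyC rat)) polyC_eq0 pnatr_eq0.
apply: (mulfI n1_neq0); rewrite !Lop_succ sol_f sol_g /tshift /sscale (IH n) //.
by case: n {n1_neq0} IH => [|n] IH //; rewrite (IH n).
Qed.

Lemma inv_factS n : (n.+1)%:R * ((n.+1)`!)%:R^-1 = (n`!)%:R^-1 :> rat.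
Proof. by rewrite factS natrM invfM mulrA divff ?mul1r // pnatr_eq0. Qed.

Lemma solves_egf a b r q :
  (forall n, q n.+1 - 'X *+ 2 * (n%:R * q n) - dx_coef * (q n)^`()
     = a * q n + b * (n%:R * q n.-1) + r n) ->
  solves a b (tshift (egf r)) (egf q).
Proof.
move=> rec [|n].
  by rewrite /Lop /ssub /tdiff /tshift /sscale /= !(mul0r, mulr0); ring.
have egf_succ k : k.+1%:R * egf q k.+1 = (k`!)%:R^-1 *: q k.+1.
  by rewrite /egf mulr_natl -scaler_nat scalerA inv_factS.
have tshift_egf k : tshift (egf q) k = (k`!)%:R^-1 *: (k%:R * q k.-1).
  case: k => [|k]; first by rewrite /= mul0r scaler0.
  by rewrite /= /egf mulr_natl -scaler_nat scalerA mulrC inv_factS.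
rewrite /Lop /ssub /tdiff /xdiff /sscale /= egf_succ tshift_egf.
by rewrite /egf derivZ -!scalerAr -!scalerBr rec -!scalerDr.
Qed.

Lemma tshift_egf0 : tshift (egf (fun _ => 0)) = zero_series.
Proof. by apply: series_ext => -[|n] //; rewrite /= /egf scaler0. Qed.

Definition Dser : series := egf (fun k => ('X *+ 2) ^+ k - 'X * 2%:P ^+ k).
(* (1 - x) e^((1+x)t), the claimed value of D * sum_n B_n t^n/n!. *)
Definition Kser : series := egf (fun k => (1 - 'X) * ('X + 1) ^+ k).
(* e^((1+x)t) - x e^(2t), the claimed value of D * sum_n B^+_n t^n/n!. *)
Definition Kplus_ser : series := egf (fun k => ('X + 1) ^+ k - 'X * 2%:P ^+ k).

Lemma solves_D : solves ('X *+ 2) (- ('X *+ 4)) zero_series Dser.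
Proof.
rewrite -tshift_egf0; apply: solves_egf => n.
rewrite /dx_coef derivB derivM derivX !deriv_exp derivC derivMn derivX.
by case: n => [|n] /=; rewrite ?expr0 ?expr1 ?exprS; ring.
Qed.

Lemma solves_Bpoly : solves (1 + 'X) 0 zero_series (egf Bpoly).
Proof.
rewrite -tshift_egf0; apply: solves_egf => n.
by rewrite Bpoly_rec -mul_polyC rmorphM /= !rmorph_nat /dx_coef; ring.
Qed.

Lemma solves_Bplus : solves 0 0 (tshift (egf Bpoly)) (egf Bplus).
Proof.
apply: solves_egf => n.
by rewrite Bplus_rec -mul_polyC rmorphM /= !rmorph_nat /dx_coef; ring.
Qed.

Lemma solves_Kser : solves (1 + 'X *+ 3) (- ('X *+ 4)) zero_series Kser.
Proof.
rewrite -tshift_egf0; apply: solves_egf => n.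
rewrite /dx_coef derivM derivB derivC derivX deriv_exp derivD derivX derivC.
by case: n => [|n] /=; rewrite ?expr0 ?exprS; ring.
Qed.

Lemma solves_Kplus_ser : solves ('X *+ 2) (- ('X *+ 4)) (tshift Kser) Kplus_ser.
Proof.
apply: solves_egf => n.
rewrite /dx_coef derivB derivM derivX !deriv_exp derivC derivD derivX derivC.
by case: n => [|n] /=; rewrite ?expr0 ?exprS; ring.
Qed.

(* D * sum_n B_n t^n/n! = (1 - x) e^((1+x)t): both sides solve the same
   equation, L being a derivation, and have the same constant term. *)
Lemma D_Bpoly : ser_mul Dser (egf Bpoly) = Kser.
Proof.
apply: solves_unique solves_Kser.
  rewrite /ser_mul big_ord1 /Dser /Kser /egf Bpoly0 /= invr1 !scale1r !expr0; ring.
move=> n; rewrite Lop_mul (solves_eq solves_D) (solves_eq solves_Bpoly).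
rewrite !ser_mulE /sadd /sscale /tshift /zero_series.
by case: n => [|[|n]] /=; ring.
Qed.

Lemma D_Bplus : ser_mul Dser (egf Bplus) = Kplus_ser.
Proof.
apply: solves_unique solves_Kplus_ser.
  rewrite /ser_mul big_ord1 /Dser /Kplus_ser /egf /= invr1 !scale1r !expr0; ring.
move=> n; rewrite Lop_mul (solves_eq solves_D) (solves_eq solves_Bplus).
rewrite !ser_mulE D_Bpoly /sadd /sscale /tshift /zero_series.
by case: n => [|[|n]] /=; ring.
Qed.

Lemma inv_fact_binomial N k : (k <= N)%N ->
  (k`!)%:R^-1 * ((N - k)`!)%:R^-1 = (N`!)%:R^-1 * ('C(N, k))%:R :> rat.
Proof.
move=> le_kN; rewrite -(bin_fact le_kN) !natrM !invfM.
have bin_neq0 : ('C(N, k))%:R != 0 :> rat by rewrite pnatr_eq0 -lt0n bin_gt0.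
by rewrite [RHS]mulrC mulVKf.
Qed.

Lemma ser_exp_mul a b : ser_mul (ser_exp a) (ser_exp b) = ser_exp (a + b).
Proof.
apply: series_ext => N; rewrite /ser_mul /ser_exp addrC exprDn scaler_sumr.
apply: eq_bigr => k _; have le_kN : (k <= N)%N by rewrite -ltnS.
rewrite -scalerAl -scalerAr scalerA inv_fact_binomial // -scalerA scaler_nat.
by rewrite mulrC.
Qed.

Theorem proposition7p7 :
  (forall n : nat, (1 <= n)%N ->
     Bplus n = (2 * (n.-1)%:R) *: ('X * Bplus n.-1)
               + ('X *+ 2 * (1 - 'X)) * (Bplus n.-1)^`()
               + Bpoly n.-1)
  /\
  (forall N : nat,
     ser_mul (fun k => ser_exp ('X *+ 2) k - 'X * ser_exp 2%:P k) (egf Bplus) N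
     = ser_mul (ser_exp 1) (fun k => ser_exp 'X k - 'X * ser_exp 1 k) N)
  /\
  (forall N : nat,
     ser_mul (fun k => ser_exp ('X *+ 2) k - 'X * ser_exp 2%:P k) (egf Bminus) N
     = 'X * ser_mul (ser_exp 1) (fun k => ser_exp 1 k - ser_exp 'X k) N).
Proof.
have D_eq : (fun k => ser_exp ('X *+ 2) k - 'X * ser_exp 2%:P k) = Dser.
  by apply: series_ext => k; rewrite /Dser /ser_exp /egf scalerBr scalerAr.
have two : 1 + 1 = 2%:P :> {poly rat} by rewrite -polyC1 -polyCD.
split; first by case=> [|n] // _; exact: Bplus_rec.
rewrite D_eq; split=> N.
- have -> : (fun k => ser_exp 'X k - 'X * ser_exp 1 k) =
            ssub (ser_exp 'X) (sscale 'X (ser_exp 1)) by [].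
  rewrite D_Bplus ser_mulBr ser_mulZr !ser_exp_mul two (addrC 1 'X).
  by rewrite /ssub /sscale /Kplus_ser /ser_exp /egf scalerBr scalerAr.
- have -> : egf Bminus = ssub (egf Bpoly) (egf Bplus).
    by apply: series_ext => k; rewrite /egf /ssub Bminus_eq scalerBr.
  have -> : (fun k => ser_exp 1 k - ser_exp 'X k) = ssub (ser_exp 1) (ser_exp 'X) by [].
  rewrite ser_mulBr D_Bpoly D_Bplus ser_mulBr !ser_exp_mul two (addrC 1 'X).
  by rewrite /ssub /Kser /Kplus_ser /ser_exp /egf -!mul_polyC; ring.
Qed.
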